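(* Let $s$ be an integer and let $G(x,L)=1+\operatorname{sgn}(s)\sum_{n\ge1}\gamma_n(x)L^n$ be a solution of the analytic Dyson-Schwinger equation \[ G(x,L) = 1 + \operatorname{sgn}(s)\sum_{k \geq 1}x^k\,G\!\left(x,\tfrac{d}{d(-\rho)}\right)^{1+sk}(e^{-L\rho}-1)F_{k}(\rho) \Big|_{\rho=0}, \qquad F_k(\rho) = \sum_{i=-1}^{\infty} f_{k,i+1}\rho^i . \] For each $k\ge1$ let $g_k(\rho)$ be a formal Laurent series with real coefficients of the form $g_k(\rho)=\frac{1}{\rho}+O(\rho^0)$. Then there exist unique real numbers $r_k$, $k\geq 1$, such that \[ \sum_{k \geq 1}x^kG\!\left(x,\tfrac{d}{d(-\rho)}\right)^{1+sk}(e^{-L\rho}-1)F_{k}(\rho) \Big|_{\rho=0} = \sum_{k \geq 1}x^kG\!\left(x,\tfrac{d}{d(-\rho)}\right)^{1+sk}(e^{-L\rho}-1)\,r_k\,g_k(\rho) \Big|_{\rho=0} \] as formal series in $x$ and $L$. In particular (taking $g_k(\rho)=1/(\rho(1-\rho))$) each $F_k$ may be replaced by a pure geometric series $r_k/(\rho(1-\rho))$ without any additional correction terms involving higher powers of $L$.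
   Context: $\operatorname{sgn}(s)\in\{-1,0,1\}$ denotes the sign of $s$. The coefficients $f_{k,j}$ are given real numbers, so each $F_k(\rho)$ is a formal Laurent series in $\rho$ with at most a simple pole at $0$. $G(x,L)$ is a formal power series in $x$ and $L$ with constant term $1$, and the $\gamma_n(x)$ are formal power series in $x$ without constant term; powers $G^{m}$ with $m$ a negative integer are formal inverses. Notation: for a formal series $H(x,L)$ with constant term $1$ and an integer $m$, write $H(x,L)^m=\sum_{n\ge0}c_n(x)L^n$; then $H\!\left(x,\frac{d}{d(-\rho)}\right)^{m}(e^{-L\rho}-1)F(\rho)\big|_{\rho=0}$ means $\sum_{n\ge0}c_n(x)\left(-\frac{d}{d\rho}\right)^n\big[(e^{-L\rho}-1)F(\rho)\big]$ evaluated at $\rho=0$, where $(e^{-L\rho}-1)F(\rho)$ is a formal power series in $\rho$ (the factor $e^{-L\rho}-1$ cancels the simple pole) whose coefficients are polynomials in $L$. Here $L$ appearing inside $e^{-L\rho}$ is the variable $L$ of the left-hand side, not the one substituted by the derivative operator. *)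

From Stdlib Require Import Reals ZArith Arith Bool.
Open Scope R_scope.

Fixpoint sumR (n : nat) (f : nat -> R) : R :=
  match n with
  | O => 0
  | S n' => sumR n' f + f n'
  end.

Definition sgnR (s : Z) : R := IZR (Z.sgn s).

(* A formal power series in x and L with real coefficients:
   A i n = coefficient of x^i L^n. *)
Definition ser2 := nat -> nat -> R.

Definition one2 : ser2 := fun i n => if (i =? 0)%nat && (n =? 0)%nat then 1 else 0.

Definition mul2 (A B : ser2) : ser2 :=
  fun i n => sumR (S i) (fun a => sumR (S n) (fun b => A a b * B (i - a)%nat (n - b)%nat)).

Fixpoint pow2 (A : ser2) (j : nat) : ser2 :=
  match j with
  | O => one2
  | S j' => mul2 A (pow2 A j')
  end.

Fixpoint fallingR (m : R) (j : nat) : R :=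
  match j with
  | O => 1
  | S j' => fallingR m j' * (m - INR j')
  end.
Definition binomR (m : Z) (j : nat) : R := fallingR (IZR m) j / INR (fact j).

(* Integer power G^m of a series G with constant term 1, via the binomial series
   G^m = (1+H)^m = sum_j binom(m,j) H^j,  H = G - 1.  When the x^0-part of G is 1
   (as in the theorem), [x^i] H^j = 0 for j > i, so the sum over j <= i is exact.
   For m < 0 this is the formal inverse power. *)
Definition powZ (G : ser2) (m : Z) : ser2 :=
  fun i n => sumR (S i) (fun j => binomR m j *
                 pow2 (fun a b => G a b - one2 a b) j i n).

(* A formal Laurent series F(rho) = sum_{j>=0} f j * rho^(j-1) (at most a simple pole).
   Coefficient of rho^q L^l in (e^{-L rho} - 1): nonzero only for l = q >= 1,
   equal to (-1)^q / q!. *)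
Definition expm1coef (q l : nat) : R :=
  if (1 <=? q)%nat && (l =? q)%nat then (-1) ^ q / INR (fact q) else 0.

(* Coefficient of rho^p L^l of the power series (e^{-L rho} - 1) F(rho):
   sum over q + (j - 1) = p, i.e. j = p + 1 - q, 0 <= q <= p + 1. *)
Definition expF (f : nat -> R) (p l : nat) : R :=
  sumR (S (S p)) (fun q => expm1coef q l * f (p + 1 - q)%nat).

(* Coefficient of L^l of  (-d/d rho)^n [ (e^{-L rho} - 1) F(rho) ] |_{rho = 0}. *)
Definition derivAt0 (f : nat -> R) (n l : nat) : R :=
  (-1) ^ n * INR (fact n) * expF f n l.

(* Coefficient of x^i L^l of  G(x, d/d(-rho))^m (e^{-L rho}-1) F(rho) |_{rho=0}
   = sum_n [x^i L^n](G^m) * [L^l] (-d/drho)^n[...]|_0.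
   The sum over n is taken for n <= i: for any solution G of the DSE one has
   [x^i L^n] G^m = 0 for n > i (gamma_n(x) = O(x^n)), so this is the exact value. *)
Definition opDSE (G : ser2) (m : Z) (f : nat -> R) : ser2 :=
  fun i l => sumR (S i) (fun n => powZ G m i n * derivAt0 f n l).

(* Coefficient of x^i L^l of
   sum_{k>=1} x^k G(x, d/d(-rho))^{1+sk} (e^{-L rho}-1) F_k(rho) |_{rho=0},
   where F k j = f_{k,j}, i.e. F_k(rho) = sum_j F k j rho^(j-1). *)
Definition DSEsum (G : ser2) (s : Z) (F : nat -> nat -> R) : ser2 :=
  fun i l => sumR i (fun t =>
     opDSE G (1 + s * Z.of_nat (S t))%Z (F (S t)) (i - S t)%nat l).

Definition DSE_form (s : Z) (G : ser2) : Prop :=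
  exists gamma : nat -> nat -> R,
    (forall n, gamma n O = 0) /\
    (forall i n, G i n = one2 i n + sgnR s * (if (n =? 0)%nat then 0 else gamma n i)).

Definition DSE_solution (s : Z) (F : nat -> nat -> R) (G : ser2) : Prop :=
  forall i l, G i l = one2 i l + sgnR s * DSEsum G s F i l.

(* Write Q_H = sum_k x^k G(x, d/d(-rho))^(1+sk) (e^(-L rho) - 1) H_k(rho)|_(rho=0) for a
   family H = (H_k) of Laurent series with at most a simple pole ([DSEsum G s H]).

   (1) Q_H is determined by its L^1-coefficient.  Let gamma = [L^1] G and
       D_c X = d_L X - gamma (c + s x d_x) X.  Since d_L - s gamma x d_x is a derivation,
       D_m (G^m) = m G^(m-1) D_1 G for every integer m.  Moreover
       d_L Q_H = Psi_H := sum_k x^k sum_j (-1)^(j+1) H_(k,j) d_L^j G^(1+sk), and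
       D_1 (x^k X) = x^k D_(1+sk) X.  The DSE gives d_L G = sgn(s) Psi_F, whence by
       induction on the x-order the renormalization group equation D_1 G = 0; then
       D_1 Psi_H = 0 for every H, a recursion computing Psi_H from its L^0-part, i.e.
       from [L^1] Q_H.
   (2) [x^i L^1] Q_H = -H_(i,0) + (terms in H_1, ..., H_(i-1)): a unitriangular system in
       the residues, which for H_k = r_k g_k with g_k = 1/rho + O(1) has exactly one
       solution r matching [L^1] Q_F. *)

From Stdlib Require Import Reals ZArith Arith Lia Lra Ring Field FunctionalExtensionality.
Open Scope R_scope.

Lemma sumR_ext n f g : (forall k, (k < n)%nat -> f k = g k) -> sumR n f = sumR n g.
Proof.
  induction n as [|n IH]; intros H; simpl; [reflexivity|].
  rewrite IH by (intros; apply H; lia). rewrite H by lia. reflexivity.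
Qed.

Lemma sumR_add n f g : sumR n (fun k => f k + g k) = sumR n f + sumR n g.
Proof. induction n as [|n IH]; simpl; [ring|]. rewrite IH; ring. Qed.

Lemma sumR_scal n c f : sumR n (fun k => c * f k) = c * sumR n f.
Proof. induction n as [|n IH]; simpl; [ring|]. rewrite IH; ring. Qed.

Lemma sumR_scalr n c f : sumR n (fun k => f k * c) = sumR n f * c.
Proof. induction n as [|n IH]; simpl; [ring|]. rewrite IH; ring. Qed.

Lemma sumR_zero n f : (forall k, (k < n)%nat -> f k = 0) -> sumR n f = 0.
Proof.
  induction n as [|n IH]; intros H; simpl; [reflexivity|].
  rewrite IH by (intros; apply H; lia). rewrite H by lia. ring.
Qed.

Lemma sumR_shift n f : sumR (S n) f = f 0%nat + sumR n (fun k => f (S k)).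
Proof. induction n as [|n IH]; simpl in *; [ring|]. rewrite IH. ring. Qed.

Lemma sumR_swap n m f :
  sumR n (fun a => sumR m (fun b => f a b)) = sumR m (fun b => sumR n (fun a => f a b)).
Proof.
  induction n as [|n IH]; simpl.
  - symmetry; apply sumR_zero; auto.
  - rewrite IH, <- sumR_add. reflexivity.
Qed.

Lemma sumR_rev n f : sumR n f = sumR n (fun k => f (n - 1 - k)%nat).
Proof.
  induction n as [|n IH]; [reflexivity|].
  rewrite (sumR_shift n (fun k => f (S n - 1 - k)%nat)).
  change (sumR (S n) f) with (sumR n f + f n). rewrite IH, Rplus_comm.
  replace (S n - 1 - 0)%nat with n by lia. f_equal.
  apply sumR_ext; intros; f_equal; lia.
Qed.

Lemma sumR_trunc N M f : (M <= N)%nat ->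
  (forall j, (M <= j)%nat -> (j < N)%nat -> f j = 0) -> sumR N f = sumR M f.
Proof.
  induction N as [|N IH]; intros HM H.
  - replace M with 0%nat by lia; reflexivity.
  - destruct (Nat.eq_dec M (S N)) as [->|hne]; [reflexivity|]. simpl.
    rewrite IH by (try lia; intros; apply H; lia). rewrite H by lia. ring.
Qed.

Lemma sumR_single N k f : (forall q, (q < N)%nat -> q <> k -> f q = 0) ->
  sumR N f = if (k <? N)%nat then f k else 0.
Proof.
  intros H. destruct (k <? N)%nat eqn:Ek.
  - apply Nat.ltb_lt in Ek.
    rewrite (sumR_trunc N (S k)) by (try lia; intros; apply H; lia). simpl.
    rewrite sumR_zero by (intros; apply H; lia). ring.
  - apply Nat.ltb_ge in Ek. apply sumR_zero; intros; apply H; lia.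
Qed.

Lemma sumR_offset N l psi :
  sumR N (fun n => if (l <=? n)%nat then psi (n - l)%nat else 0) = sumR (N - l) psi.
Proof.
  induction N as [|N IH]; [reflexivity|].
  change (sumR (S N) ?f) with (sumR N f + f N). rewrite IH.
  destruct (l <=? N)%nat eqn:E.
  - apply Nat.leb_le in E. replace (S N - l)%nat with (S (N - l)) by lia. reflexivity.
  - apply Nat.leb_gt in E. replace (S N - l)%nat with 0%nat by lia.
    replace (N - l)%nat with 0%nat by lia. simpl; ring.
Qed.

Lemma sumR_triangle i phi F :
  (forall a a', (a' <= a)%nat -> (a <= i)%nat -> F a a' = phi a' (a - a')%nat) ->
  sumR (S i) (fun a => sumR (S a) (F a))
  = sumR (S i) (fun a' => sumR (S (i - a')) (phi a')).
Proof.
  intros HF.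
  transitivity (sumR (S i) (fun a => sumR (S i) (fun a' =>
                  if (a' <=? a)%nat then phi a' (a - a')%nat else 0))).
  { apply sumR_ext; intros a ha. symmetry.
    rewrite (sumR_trunc (S i) (S a)) by (try lia; intros j h _;
      rewrite (proj2 (Nat.leb_gt j a)) by lia; reflexivity).
    apply sumR_ext; intros a' ha'. rewrite (proj2 (Nat.leb_le a' a)) by lia.
    symmetry; apply HF; lia. }
  rewrite sumR_swap. apply sumR_ext; intros a' ha'.
  rewrite sumR_offset. f_equal. lia.
Qed.

Lemma fallingR_S x j : fallingR x (S j) = x * fallingR (x - 1) j.
Proof.
  revert x; induction j as [|j IH]; intros x; [simpl; ring|].
  change (fallingR x (S (S j))) with (fallingR x (S j) * (x - INR (S j))).
  change (fallingR (x - 1) (S j)) with (fallingR (x - 1) j * (x - 1 - INR j)).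
  rewrite IH, S_INR. ring.
Qed.

Lemma binomR_0 m : binomR m 0 = 1.
Proof. unfold binomR; simpl; field. Qed.

(* [(j+1) binom(m, j+1) = m binom(m-1, j)]: the derivative of [(1+h)^m]. *)
Lemma binomR_deriv m j : INR (S j) * binomR m (S j) = IZR m * binomR (m - 1) j.
Proof.
  unfold binomR. rewrite fallingR_S, minus_IZR.
  change (fact (S j)) with (S j * fact j)%nat. rewrite mult_INR.
  field. split; [apply not_0_INR, fact_neq_0 | apply not_0_INR; lia].
Qed.

(* Pascal's rule [binom(m, j+1) = binom(m-1, j+1) + binom(m-1, j)]: [(1+h)^m = (1+h)^(m-1) (1+h)]. *)
Lemma binomR_pascal m j : binomR m (S j) = binomR (m - 1) (S j) + binomR (m - 1) j.
Proof.
  unfold binomR. rewrite fallingR_S, minus_IZR. simpl fallingR.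
  change (fact (S j)) with (S j * fact j)%nat. rewrite mult_INR, S_INR.
  field. split; [apply not_0_INR, fact_neq_0 |]. pose proof (pos_INR j). lra.
Qed.

(** The commutative ring of bivariate series [ser2] (coefficients of [x^i L^n]). *)

Definition add2 (A B : ser2) : ser2 := fun i n => A i n + B i n.
Definition opp2 (A : ser2) : ser2 := fun i n => - A i n.
Definition sub2 (A B : ser2) : ser2 := fun i n => A i n - B i n.
Definition zero2 : ser2 := fun _ _ => 0.

Ltac ser2_ext := let i := fresh "i" in let n := fresh "n" in
  apply functional_extensionality; intro i; apply functional_extensionality; intro n.

Lemma mul2_comm A B : mul2 A B = mul2 B A.
Proof.
  ser2_ext. unfold mul2. rewrite sumR_rev. apply sumR_ext; intros a Ha.
  rewrite sumR_rev. apply sumR_ext; intros b Hb.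
  replace (S i - 1 - a)%nat with (i - a)%nat by lia.
  replace (S n - 1 - b)%nat with (n - b)%nat by lia.
  replace (i - (i - a))%nat with a by lia. replace (n - (n - b))%nat with b by lia. ring.
Qed.

Lemma mul2_addl A B C : mul2 (add2 A B) C = add2 (mul2 A C) (mul2 B C).
Proof.
  ser2_ext. unfold mul2, add2. rewrite <- sumR_add. apply sumR_ext; intros.
  rewrite <- sumR_add. apply sumR_ext; intros. ring.
Qed.

Lemma mul2_one A : mul2 one2 A = A.
Proof.
  ser2_ext. unfold mul2. rewrite sumR_shift, (sumR_zero i).
  2:{ intros. apply sumR_zero. intros. unfold one2. simpl. ring. }
  rewrite sumR_shift, sumR_zero by (intros; unfold one2; simpl; ring).
  unfold one2; simpl. rewrite !Nat.sub_0_r. ring.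
Qed.

(* Both sides are the sum of [A a' b' B c d C (i-a'-c) (n-b'-d)] over [a'+c <= i, b'+d <= n]. *)
Lemma mul2_assoc A B C : mul2 A (mul2 B C) = mul2 (mul2 A B) C.
Proof.
  ser2_ext. unfold mul2. symmetry.
  rewrite (sumR_ext (S i) _ (fun a => sumR (S a) (fun a' => sumR (S n) (fun b =>
      sumR (S b) (fun b' => A a' b' * B (a - a')%nat (b - b')%nat * C (i - a)%nat (n - b)%nat))))).
  2:{ intros a Ha. rewrite sumR_swap. apply sumR_ext; intros b Hb. rewrite <- sumR_scalr.
      apply sumR_ext; intros a' Ha'. rewrite <- sumR_scalr. reflexivity. }
  rewrite (sumR_triangle i (fun a' c => sumR (S n) (fun b' => sumR (S (n - b')) (fun d =>
      A a' b' * B c d * C (i - (a' + c))%nat (n - (b' + d))%nat)))).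
  2:{ intros a a' H1 H2.
      apply (sumR_triangle n (fun b' d =>
        A a' b' * B (a - a')%nat d * C (i - (a' + (a - a')))%nat (n - (b' + d))%nat)).
      intros b b' H3 H4. do 3 f_equal; lia. }
  apply sumR_ext; intros a' Ha'. rewrite sumR_swap. apply sumR_ext; intros b' Hb'.
  rewrite <- sumR_scal. apply sumR_ext; intros c Hc. rewrite <- sumR_scal.
  apply sumR_ext; intros d Hd.
  replace (i - a' - c)%nat with (i - (a' + c))%nat by lia.
  replace (n - b' - d)%nat with (n - (b' + d))%nat by lia. ring.
Qed.

Lemma ser2_ring : ring_theory zero2 one2 add2 mul2 sub2 opp2 eq.
Proof.
  constructor; intros;
    try (ser2_ext; unfold add2, sub2, opp2, zero2; ring).
  - apply mul2_one.
  - apply mul2_comm.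
  - apply mul2_assoc.
  - apply mul2_addl.
Qed.

Add Ring ser2R : ser2_ring.

Definition cst (c : R) : ser2 := fun i n => if andb (i =? 0)%nat (n =? 0)%nat then c else 0.

Lemma mul2_cst_pt c A i n : mul2 (cst c) A i n = c * A i n.
Proof.
  unfold mul2. rewrite sumR_shift, (sumR_zero i).
  2:{ intros; apply sumR_zero; intros; unfold cst; simpl; ring. }
  rewrite sumR_shift, sumR_zero by (intros; unfold cst; simpl; ring).
  unfold cst; simpl. rewrite !Nat.sub_0_r. ring.
Qed.

Lemma cst_add a b : cst (a + b) = add2 (cst a) (cst b).
Proof. ser2_ext. unfold cst, add2. destruct (andb _ _); ring. Qed.

Lemma cst_mul a b : cst (a * b) = mul2 (cst a) (cst b).
Proof. ser2_ext. rewrite mul2_cst_pt. unfold cst. destruct (andb _ _); ring. Qed.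

Lemma cst_one : cst 1 = one2.
Proof. reflexivity. Qed.

Lemma cst_zero : cst 0 = zero2.
Proof. ser2_ext. unfold cst, zero2. destruct (andb _ _); ring. Qed.

Definition dL (A : ser2) : ser2 := fun i n => INR (S n) * A i (S n).
Definition xdx (A : ser2) : ser2 := fun i n => INR i * A i n.
Fixpoint dLn (j : nat) (A : ser2) : ser2 := match j with O => A | S j' => dL (dLn j' A) end.
Definition shiftk (k : nat) (A : ser2) : ser2 :=
  fun i n => if (k <=? i)%nat then A (i - k)%nat n else 0.
Definition sum2 (N : nat) (F : nat -> ser2) : ser2 := fun i n => sumR N (fun j => F j i n).

Lemma sum2_0 F : sum2 0 F = zero2.
Proof. reflexivity. Qed.

Lemma sum2_S N F : sum2 (S N) F = add2 (sum2 N F) (F N).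
Proof. reflexivity. Qed.

Lemma dL_add A B : dL (add2 A B) = add2 (dL A) (dL B).
Proof. ser2_ext. unfold dL, add2. ring. Qed.

Lemma dL_sub A B : dL (sub2 A B) = sub2 (dL A) (dL B).
Proof. ser2_ext. unfold dL, sub2. ring. Qed.

Lemma dL_zero : dL zero2 = zero2.
Proof. ser2_ext. unfold dL, zero2. ring. Qed.

Lemma dL_cst c : dL (cst c) = zero2.
Proof. ser2_ext. unfold dL, cst, zero2. simpl. rewrite Bool.andb_false_r. ring. Qed.

Lemma xdx_add A B : xdx (add2 A B) = add2 (xdx A) (xdx B).
Proof. ser2_ext. unfold xdx, add2. ring. Qed.

Lemma xdx_zero : xdx zero2 = zero2.
Proof. ser2_ext. unfold xdx, zero2. ring. Qed.

Lemma xdx_cst c : xdx (cst c) = zero2.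
Proof. ser2_ext. unfold xdx, cst, zero2. destruct i; simpl; ring. Qed.

Lemma dL_xdx A : dL (xdx A) = xdx (dL A).
Proof. ser2_ext. unfold dL, xdx. ring. Qed.

(* Leibniz rule for [d/dL]: [(n+1) [L^(n+1)] AB] splits as [b + (n+1-b)] over [b]. *)
Lemma dL_mul A B : dL (mul2 A B) = add2 (mul2 (dL A) B) (mul2 A (dL B)).
Proof.
  ser2_ext. unfold dL, mul2, add2. rewrite <- sumR_add, <- sumR_scal.
  apply sumR_ext; intros a Ha.
  set (al := fun b => A a b). set (be := fun b => B (i - a)%nat b).
  change (INR (S n) * sumR (S (S n)) (fun b => al b * be (S n - b)%nat) =
    sumR (S n) (fun b => INR (S b) * al (S b) * be (n - b)%nat)
    + sumR (S n) (fun b => al b * (INR (S (n - b)) * be (S (n - b))))).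
  rewrite <- sumR_scal.
  rewrite (sumR_ext (S (S n)) _ (fun b => INR b * al b * be (S n - b)%nat
                                        + al b * (INR (S n - b) * be (S n - b)%nat))).
  2:{ intros b Hb. replace (INR (S n)) with (INR b + INR (S n - b))
        by (rewrite <- plus_INR; f_equal; lia). ring. }
  rewrite sumR_add. f_equal.
  - rewrite sumR_shift. simpl (INR 0). rewrite !Rmult_0_l, Rplus_0_l. reflexivity.
  - change (sumR (S (S n)) ?f) with (sumR (S n) f + f (S n)). cbv beta.
    rewrite Nat.sub_diag. simpl (INR 0). rewrite Rmult_0_l, Rmult_0_r, Rplus_0_r.
    apply sumR_ext; intros b Hb. replace (S n - b)%nat with (S (n - b)) by lia. reflexivity.
Qed.

Lemma xdx_mul A B : xdx (mul2 A B) = add2 (mul2 (xdx A) B) (mul2 A (xdx B)).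
Proof.
  ser2_ext. unfold xdx, mul2, add2. rewrite <- sumR_add, <- sumR_scal.
  apply sumR_ext; intros a Ha. rewrite <- !sumR_scal, <- sumR_add.
  apply sumR_ext; intros b Hb.
  replace (INR i) with (INR a + INR (i - a)) by (rewrite <- plus_INR; f_equal; lia). ring.
Qed.

Lemma dLn_pt j A i l : dLn j A i l = INR (fact (l + j)) / INR (fact l) * A i (l + j)%nat.
Proof.
  revert l. induction j as [|j IH]; intros l; simpl dLn.
  - rewrite Nat.add_0_r. field. apply not_0_INR, fact_neq_0.
  - unfold dL. rewrite IH. replace (S l + j)%nat with (l + S j)%nat by lia.
    change (fact (S l)) with (S l * fact l)%nat. rewrite mult_INR.
    field. split; [apply not_0_INR, fact_neq_0 | apply not_0_INR; lia].
Qed.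

Lemma dLn_zero j : dLn j zero2 = zero2.
Proof. induction j as [|j IH]; simpl; [reflexivity|]. rewrite IH; apply dL_zero. Qed.

(** Truncation: [agree i A B] means [A = B] modulo [x^(i+1)]; [ordp p A] means
    [A = O(x^p)]; [degb d A] means [[x^a L^b] A = 0] unless [b + d <= a]. *)

Definition agree (i : nat) (A B : ser2) : Prop := forall a b, (a <= i)%nat -> A a b = B a b.

Lemma agree_refl i A : agree i A A.
Proof. intros a b _; reflexivity. Qed.

Lemma agree_sym i A B : agree i A B -> agree i B A.
Proof. intros H a b h; symmetry; auto. Qed.

Lemma agree_trans i A B C : agree i A B -> agree i B C -> agree i A C.
Proof. intros H1 H2 a b h; rewrite H1; auto. Qed.

Lemma agree_eq i A B : A = B -> agree i A B.
Proof. intros ->; apply agree_refl. Qed.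

Lemma agree_add i A B A' B' : agree i A A' -> agree i B B' -> agree i (add2 A B) (add2 A' B').
Proof. intros H1 H2 a b h; unfold add2; rewrite H1, H2; auto. Qed.

Lemma agree_sub i A B A' B' : agree i A A' -> agree i B B' -> agree i (sub2 A B) (sub2 A' B').
Proof. intros H1 H2 a b h; unfold sub2; rewrite H1, H2; auto. Qed.

(* [x]-adic truncation is compatible with products since [x]-degrees only add up. *)
Lemma agree_mul i A B A' B' : agree i A A' -> agree i B B' -> agree i (mul2 A B) (mul2 A' B').
Proof.
  intros H1 H2 a b h; unfold mul2. apply sumR_ext; intros a' Ha'.
  apply sumR_ext; intros b' Hb'. rewrite H1, H2 by lia. reflexivity.
Qed.

Lemma agree_dL i A B : agree i A B -> agree i (dL A) (dL B).
Proof. intros H a b h; unfold dL; rewrite H; auto. Qed.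

Lemma agree_xdx i A B : agree i A B -> agree i (xdx A) (xdx B).
Proof. intros H a b h; unfold xdx; rewrite H; auto. Qed.

Lemma agree_dLn i j A B : agree i A B -> agree i (dLn j A) (dLn j B).
Proof. intros H; induction j; simpl; auto using agree_dL. Qed.

Definition ordp (p : nat) (A : ser2) : Prop := forall a b, (a < p)%nat -> A a b = 0.

Lemma ordp_mul j A B : ordp 1 A -> ordp j B -> ordp (S j) (mul2 A B).
Proof.
  intros HA HB a b h. unfold mul2. apply sumR_zero; intros a' Ha'.
  apply sumR_zero; intros b' Hb'.
  destruct a'; [rewrite HA by lia | rewrite HB by lia]; ring.
Qed.

Definition degb (d : nat) (A : ser2) : Prop := forall a b, (a < b + d)%nat -> A a b = 0.

Lemma degb_mul A B : degb 0 A -> degb 0 B -> degb 0 (mul2 A B).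
Proof.
  intros HA HB a b h. unfold mul2. apply sumR_zero; intros a' Ha'.
  apply sumR_zero; intros b' Hb'.
  destruct (Nat.lt_ge_cases a' b'); [rewrite HA by lia | rewrite HB by lia]; ring.
Qed.

Lemma degb_cst c : degb 0 (cst c).
Proof.
  intros a b h; unfold cst. destruct b; [lia|]. simpl. rewrite Bool.andb_false_r. reflexivity.
Qed.

Lemma degb_dLn j A : degb 0 A -> degb j (dLn j A).
Proof.
  intros H; induction j as [|j IH]; simpl; [exact H|].
  intros a b h; unfold dL; rewrite IH by lia; ring.
Qed.

Lemma degb_sum2 N F : (forall j, degb 0 (F j)) -> degb 0 (sum2 N F).
Proof. intros H a b h; unfold sum2; apply sumR_zero; intros; apply H; lia. Qed.

Lemma DSEsum_degb G s H : degb 0 (DSEsum G s H).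
Proof.
  intros a b h. unfold DSEsum. apply sumR_zero; intros t Ht.
  unfold opDSE. apply sumR_zero; intros n Hn.
  unfold derivAt0, expF. rewrite (sumR_zero (S (S n))); [ring|]. intros q Hq.
  unfold expm1coef. destruct (b =? q)%nat eqn:E1.
  - apply Nat.eqb_eq in E1. lia.
  - rewrite Bool.andb_false_r. ring.
Qed.

(* [(e^{-L rho} - 1) F(rho)] has no [L^0] part. *)
Lemma DSEsum_L0 G s H i : DSEsum G s H i 0%nat = 0.
Proof.
  unfold DSEsum. apply sumR_zero; intros. unfold opDSE. apply sumR_zero; intros.
  unfold derivAt0, expF. rewrite sumR_zero; [ring|].
  intros q _. unfold expm1coef. destruct q; simpl; ring.
Qed.

Lemma opDSE_x0_L1 G m f : opDSE G m f 0%nat 1%nat = - f 0%nat.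
Proof.
  unfold opDSE, powZ, derivAt0, expF, expm1coef. simpl.
  rewrite binomR_0. unfold one2. simpl. field.
Qed.

Lemma DSEsum_L1_unitriangular G s H1 H2 i : (1 <= i)%nat ->
  (forall k j, (1 <= k)%nat -> (k < i)%nat -> H1 k j = H2 k j) ->
  DSEsum G s H1 i 1%nat - DSEsum G s H2 i 1%nat = - (H1 i 0%nat - H2 i 0%nat).
Proof.
  intros hi Hagree. destruct i as [|i']; [lia|]. unfold DSEsum.
  change (sumR (S i') ?f) with (sumR i' f + f i'). cbv beta.
  rewrite Nat.sub_diag, !opDSE_x0_L1.
  rewrite (sumR_ext i' (fun t => opDSE G _ (H1 (S t)) _ _)
             (fun t => opDSE G (1 + s * Z.of_nat (S t)) (H2 (S t)) (S i' - S t)%nat 1%nat)).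
  - ring.
  - intros t ht. replace (H1 (S t)) with (H2 (S t)); [reflexivity|].
    apply functional_extensionality; intros j. symmetry; apply Hagree; lia.
Qed.

Section DysonSchwinger.

Variable s : Z.
Variable F : nat -> nat -> R.
Variable G : ser2.
Hypothesis hform : DSE_form s G.
Hypothesis hsol : DSE_solution s F G.

Definition sR : R := IZR s.

Definition gamma1 : ser2 := fun i n => if (n =? 0)%nat then G i 1%nat else 0.

Definition rgop (c : R) (X : ser2) : ser2 :=
  sub2 (dL X) (mul2 gamma1 (add2 (mul2 (cst c) X) (mul2 (cst sR) (xdx X)))).

Definition rgder (X : ser2) : ser2 := sub2 (dL X) (mul2 gamma1 (mul2 (cst sR) (xdx X))).

Definition rge_defect : ser2 := rgop 1 G.

Definition Gm1 : ser2 := fun a b => G a b - one2 a b.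

Lemma G_eq : G = add2 one2 Gm1.
Proof. ser2_ext. unfold add2, Gm1. ring. Qed.

Lemma G_L0 j : G j 0%nat = one2 j 0%nat.
Proof. destruct hform as [gam [h1 h2]]. rewrite h2. simpl. ring. Qed.

Lemma G_x0 b : G 0%nat b = one2 0%nat b.
Proof.
  destruct hform as [gam [h1 h2]]. rewrite h2.
  destruct (b =? 0)%nat; [ring|]. rewrite h1; ring.
Qed.

Lemma Gm1_ordp : ordp 1 Gm1.
Proof. intros a b h. replace a with 0%nat by lia. unfold Gm1. rewrite G_x0. ring. Qed.

(* Through the DSE, [G] inherits the degree bound of [DSEsum]. *)
Lemma Gm1_degb : degb 0 Gm1.
Proof.
  intros a b h. unfold Gm1. rewrite hsol, DSEsum_degb by lia.
  unfold one2. destruct b; [lia|]. simpl. rewrite Bool.andb_false_r. ring.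
Qed.

Lemma pow_Gm1_ordp j : ordp j (pow2 Gm1 j).
Proof.
  induction j; simpl; [intros a b h; lia|]. apply ordp_mul; auto using Gm1_ordp.
Qed.

Lemma pow_Gm1_degb j : degb 0 (pow2 Gm1 j).
Proof.
  induction j; simpl.
  - rewrite <- cst_one. apply degb_cst.
  - apply degb_mul; auto using Gm1_degb.
Qed.

Definition binser (m : Z) (N : nat) : ser2 :=
  sum2 N (fun j => mul2 (cst (binomR m j)) (pow2 Gm1 j)).

Lemma binser_S m N :
  binser m (S N) = add2 (binser m N) (mul2 (cst (binomR m N)) (pow2 Gm1 N)).
Proof. reflexivity. Qed.

Lemma binser_pt m N i n : binser m N i n = sumR N (fun j => binomR m j * pow2 Gm1 j i n).
Proof. apply sumR_ext; intros. apply mul2_cst_pt. Qed.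

(* Since [(G - 1)^j = O(x^j)], every truncation beyond [i] agrees modulo [x^(i+1)]. *)
Lemma binser_agree m N N' i : (i < N)%nat -> (i < N')%nat -> agree i (binser m N) (binser m N').
Proof.
  intros h1 h2 a b h. rewrite !binser_pt.
  rewrite (sumR_trunc N (S a)), (sumR_trunc N' (S a)); try lia; auto;
    intros j h3 h4; rewrite pow_Gm1_ordp by lia; ring.
Qed.

Lemma powZ_agree m N i : (i < N)%nat -> agree i (powZ G m) (binser m N).
Proof.
  intros h1 a b h. transitivity (binser m (S a) a b).
  - rewrite binser_pt. reflexivity.
  - apply binser_agree with (i := a); lia.
Qed.

Lemma powZ_degb m : degb 0 (powZ G m).
Proof.
  intros a b h. rewrite (powZ_agree m (S a) a) by lia.
  apply degb_sum2; [|lia]. intros j. apply degb_mul; [apply degb_cst | apply pow_Gm1_degb].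
Qed.

Lemma dL_gamma1 : dL gamma1 = zero2.
Proof. ser2_ext. unfold dL, gamma1, zero2. simpl. ring. Qed.

Lemma rgder_mul A B : rgder (mul2 A B) = add2 (mul2 (rgder A) B) (mul2 A (rgder B)).
Proof. unfold rgder. rewrite dL_mul, xdx_mul. ring. Qed.

Lemma rgder_add A B : rgder (add2 A B) = add2 (rgder A) (rgder B).
Proof. unfold rgder. rewrite dL_add, xdx_add. ring. Qed.

Lemma rgder_cst c : rgder (cst c) = zero2.
Proof. unfold rgder. rewrite dL_cst, xdx_cst. ring. Qed.

Lemma rgder_one : rgder one2 = zero2.
Proof. rewrite <- cst_one. apply rgder_cst. Qed.

Lemma rgder_zero : rgder zero2 = zero2.
Proof. rewrite <- cst_zero, rgder_cst. symmetry; apply cst_zero. Qed.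

Lemma rgder_scal c A : rgder (mul2 (cst c) A) = mul2 (cst c) (rgder A).
Proof. rewrite rgder_mul, rgder_cst. ring. Qed.

Lemma rgder_pow X j :
  rgder (pow2 X (S j)) = mul2 (cst (INR (S j))) (mul2 (pow2 X j) (rgder X)).
Proof.
  induction j as [|j IH].
  - simpl pow2. rewrite rgder_mul, rgder_one. simpl INR. rewrite cst_one. ring.
  - change (pow2 X (S (S j))) with (mul2 X (pow2 X (S j))). rewrite rgder_mul, IH.
    rewrite (S_INR (S j)), cst_add, cst_one.
    change (pow2 X (S j)) with (mul2 X (pow2 X j)). ring.
Qed.

Lemma rgop_rgder c X : rgop c X = sub2 (rgder X) (mul2 (cst c) (mul2 gamma1 X)).
Proof. unfold rgop, rgder. ring. Qed.

Lemma binser_rgder m N :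
  rgder (binser m (S N)) = mul2 (cst (IZR m)) (mul2 (binser (m - 1) N) (rgder Gm1)).
Proof.
  induction N as [|N IH].
  - rewrite binser_S. unfold binser. rewrite !sum2_0. simpl pow2.
    rewrite rgder_add, rgder_scal, rgder_one, rgder_zero. ring.
  - rewrite binser_S, rgder_add, IH, rgder_scal, rgder_pow, (binser_S (m - 1) N).
    assert (Hc : mul2 (cst (binomR m (S N))) (cst (INR (S N)))
                 = mul2 (cst (IZR m)) (cst (binomR (m - 1) N))).
    { rewrite <- !cst_mul, <- binomR_deriv. f_equal; ring. }
    transitivity (add2 (mul2 (cst (IZR m)) (mul2 (binser (m - 1) N) (rgder Gm1)))
      (mul2 (mul2 (cst (binomR m (S N))) (cst (INR (S N)))) (mul2 (pow2 Gm1 N) (rgder Gm1)))).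
    + ring.
    + rewrite Hc. ring.
Qed.

(* [(1+h)^(m-1) (1+h) = (1+h)^m], up to the top term of the truncation. *)
Lemma binser_pascal m N :
  mul2 (binser (m - 1) (S N)) G
  = add2 (binser m (S N)) (mul2 (cst (binomR (m - 1) N)) (pow2 Gm1 (S N))).
Proof.
  rewrite G_eq. induction N as [|N IH].
  - rewrite !binser_S. unfold binser. rewrite !sum2_0, !binomR_0, cst_one. simpl pow2. ring.
  - rewrite (binser_S (m - 1) (S N)), (binser_S m (S N)), mul2_addl, IH.
    rewrite (binomR_pascal m N), cst_add.
    change (pow2 Gm1 (S (S N))) with (mul2 Gm1 (pow2 Gm1 (S N))). ring.
Qed.

Lemma agree_rgop i c A B : agree i A B -> agree i (rgop c A) (rgop c B).
Proof.
  intros H. unfold rgop. apply agree_sub; [auto using agree_dL|].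
  apply agree_mul; [apply agree_refl|].
  apply agree_add; apply agree_mul; auto using agree_refl, agree_xdx.
Qed.

Lemma rgop_powZ m i :
  agree i (rgop (IZR m) (powZ G m)) (mul2 (cst (IZR m)) (mul2 (powZ G (m - 1)) rge_defect)).
Proof.
  apply agree_trans with (rgop (IZR m) (binser m (S (S i)))).
  { apply agree_rgop, powZ_agree; lia. }
  rewrite rgop_rgder, binser_rgder.
  apply agree_trans with (sub2 (mul2 (cst (IZR m)) (mul2 (binser (m - 1) (S i)) (rgder Gm1)))
      (mul2 (cst (IZR m)) (mul2 gamma1 (mul2 (binser (m - 1) (S (S i))) G)))).
  { apply agree_sub; [apply agree_refl|].
    apply agree_mul; [apply agree_refl|]. apply agree_mul; [apply agree_refl|].
    rewrite binser_pascal. intros a b h. unfold add2.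
    rewrite mul2_cst_pt, pow_Gm1_ordp by lia. ring. }
  apply agree_trans with (sub2 (mul2 (cst (IZR m)) (mul2 (powZ G (m - 1)) (rgder Gm1)))
      (mul2 (cst (IZR m)) (mul2 gamma1 (mul2 (powZ G (m - 1)) G)))).
  { apply agree_sub; apply agree_mul; try apply agree_refl.
    - apply agree_mul; [apply agree_sym, powZ_agree; lia | apply agree_refl].
    - apply agree_mul; [apply agree_refl|].
      apply agree_mul; [apply agree_sym, powZ_agree; lia | apply agree_refl]. }
  apply agree_eq. unfold rge_defect. rewrite rgop_rgder.
  replace (rgder Gm1) with (rgder G)
    by (rewrite G_eq, rgder_add, rgder_one; ring).
  rewrite cst_one. ring.
Qed.

Lemma rgop_add c A B : rgop c (add2 A B) = add2 (rgop c A) (rgop c B).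
Proof. unfold rgop. rewrite dL_add, xdx_add. ring. Qed.

Lemma rgop_zero c : rgop c zero2 = zero2.
Proof. unfold rgop. rewrite dL_zero, xdx_zero. ring. Qed.

Lemma rgop_scal c d A : rgop c (mul2 (cst d) A) = mul2 (cst d) (rgop c A).
Proof. unfold rgop. rewrite dL_mul, dL_cst, xdx_mul, xdx_cst. ring. Qed.

Lemma rgop_dL c A : rgop c (dL A) = dL (rgop c A).
Proof.
  unfold rgop. rewrite dL_sub, dL_mul, dL_gamma1, dL_add, !dL_mul, !dL_cst, dL_xdx. ring.
Qed.

Lemma rgop_dLn c j A : rgop c (dLn j A) = dLn j (rgop c A).
Proof. induction j as [|j IH]; simpl; [reflexivity|]. rewrite rgop_dL, IH. reflexivity. Qed.

Lemma rgop_sum2 c N Fs : rgop c (sum2 N Fs) = sum2 N (fun j => rgop c (Fs j)).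
Proof.
  induction N as [|N IH].
  - rewrite !sum2_0, rgop_zero. reflexivity.
  - rewrite !sum2_S, rgop_add, IH. reflexivity.
Qed.

Lemma mul_gamma1_pt Y i n : mul2 gamma1 Y i n = sumR (S i) (fun a => G a 1%nat * Y (i - a)%nat n).
Proof.
  unfold mul2. apply sumR_ext; intros a Ha.
  rewrite sumR_shift, sumR_zero by (intros; unfold gamma1; simpl; ring).
  unfold gamma1; simpl. rewrite Nat.sub_0_r. ring.
Qed.

Lemma rgop_pt c X i n : rgop c X i n = INR (S n) * X i (S n) -
  sumR (S i) (fun a => G a 1%nat * (c * X (i - a)%nat n + sR * (INR (i - a) * X (i - a)%nat n))).
Proof.
  unfold rgop, sub2 at 1. rewrite mul_gamma1_pt. unfold add2. f_equal.
  apply sumR_ext; intros a Ha. rewrite !mul2_cst_pt. reflexivity.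
Qed.

(* The Euler operator sees the extra factor [x^k] as the constant [k]. *)
Lemma rgop_shift k A : rgop 1 (shiftk k A) = shiftk k (rgop (1 + sR * INR k) A).
Proof.
  ser2_ext. rewrite rgop_pt. unfold shiftk. destruct (k <=? i)%nat eqn:Ek.
  - apply Nat.leb_le in Ek. rewrite rgop_pt. f_equal.
    rewrite (sumR_trunc (S i) (S (i - k))) by (try lia; intros j h1 h2;
      rewrite (proj2 (Nat.leb_gt k (i - j))) by lia; ring).
    apply sumR_ext; intros a Ha. rewrite (proj2 (Nat.leb_le k (i - a))) by lia.
    replace (i - a - k)%nat with (i - k - a)%nat by lia.
    replace (INR (i - a)) with (INR k + INR (i - k - a))
      by (rewrite <- plus_INR; f_equal; lia). ring.
  - apply Nat.leb_gt in Ek. rewrite sumR_zero; [ring|].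
    intros a Ha. rewrite (proj2 (Nat.leb_gt k (i - a))) by lia. ring.
Qed.

Definition diffop (c : nat -> R) (X : ser2) (N : nat) : ser2 :=
  sum2 N (fun j => mul2 (cst (c j)) (dLn j X)).

Lemma rgop_diffop c' c X N : rgop c' (diffop c X N) = diffop c (rgop c' X) N.
Proof.
  unfold diffop. rewrite rgop_sum2. f_equal. apply functional_extensionality; intro j.
  rewrite rgop_scal, rgop_dLn. reflexivity.
Qed.

Lemma diffop_pt c X N i l : diffop c X N i l = sumR N (fun j => c j * dLn j X i l).
Proof. unfold diffop, sum2. apply sumR_ext; intros. apply mul2_cst_pt. Qed.

Lemma diffop_agree c X Y N i l : agree i X Y -> diffop c X N i l = diffop c Y N i l.
Proof.
  intros H. rewrite !diffop_pt. apply sumR_ext; intros j _.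
  rewrite (agree_dLn i j X Y H); auto.
Qed.

(* On series of bounded [L]-degree only the first [i+1] terms act on [x^i]. *)
Lemma diffop_stable c X N N' i l : degb 0 X -> (i < N)%nat -> (i < N')%nat ->
  diffop c X N i l = diffop c X N' i l.
Proof.
  intros H h1 h2. rewrite !diffop_pt. pose proof (fun j => degb_dLn j _ H) as HD.
  rewrite (sumR_trunc N (S i)), (sumR_trunc N' (S i)); try lia; auto;
    intros j h3 h4; rewrite HD by lia; ring.
Qed.

Lemma diffop_zero c N i l : diffop c zero2 N i l = 0.
Proof. rewrite diffop_pt. apply sumR_zero; intros. rewrite dLn_zero. unfold zero2; ring. Qed.

Definition dcoef (H : nat -> nat -> R) (k j : nat) : R := (-1) ^ (S j) * H k j.

(* The exponent [1 + s k] attached to [x^k], here [k = t + 1]. *)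
Definition expo (t : nat) : Z := (1 + s * Z.of_nat (S t))%Z.

(* [Psi H] truncated to [k, j < N]; at [x^i] the truncation [N = i + 1] is already exact. *)
Definition PsiN (H : nat -> nat -> R) (N : nat) : ser2 :=
  sum2 N (fun t => shiftk (S t) (diffop (dcoef H (S t)) (powZ G (expo t)) N)).

Definition Psi (H : nat -> nat -> R) : ser2 := fun i l => PsiN H (S i) i l.

Lemma PsiN_pt H N a b : (a < N)%nat ->
  PsiN H N a b = sumR a (fun t => diffop (dcoef H (S t)) (powZ G (expo t)) N (a - S t)%nat b).
Proof.
  intros h. unfold PsiN, sum2. rewrite (sumR_trunc N a); try lia.
  - apply sumR_ext; intros t ht. unfold shiftk.
    rewrite (proj2 (Nat.leb_le (S t) a)) by lia. reflexivity.
  - intros j h1 h2. unfold shiftk. rewrite (proj2 (Nat.leb_gt (S j) a)) by lia. reflexivity.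
Qed.

Lemma Psi_agree H i : agree i (Psi H) (PsiN H (S i)).
Proof.
  intros a b h. unfold Psi. rewrite !PsiN_pt by lia.
  apply sumR_ext; intros t ht. apply diffop_stable; try lia. apply powZ_degb.
Qed.

Lemma derivAt0_coef f n l : INR (S l) * derivAt0 f n (S l) =
  if (l <=? n)%nat then (-1) ^ (S (n - l)) * f (n - l)%nat * (INR (fact n) / INR (fact l))
  else 0.
Proof.
  unfold derivAt0, expF. rewrite (sumR_single _ (S l)).
  2:{ intros q hq hne. unfold expm1coef.
      rewrite (proj2 (Nat.eqb_neq (S l) q)) by lia. rewrite Bool.andb_false_r. ring. }
  destruct (l <=? n)%nat eqn:El.
  - apply Nat.leb_le in El. rewrite (proj2 (Nat.ltb_lt (S l) (S (S n)))) by lia.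
    unfold expm1coef. rewrite Nat.eqb_refl. simpl andb. cbv iota.
    replace (n + 1 - S l)%nat with (n - l)%nat by lia.
    replace n with ((n - l) + l)%nat at 1 by lia. rewrite pow_add.
    change (fact (S l)) with (S l * fact l)%nat. rewrite mult_INR.
    assert (hsq : (-1) ^ l * (-1) ^ l = 1).
    { rewrite <- pow_add. replace (l + l)%nat with (2 * l)%nat by lia. apply pow_1_even. }
    assert (hf : INR (fact l) <> 0) by (apply not_0_INR, fact_neq_0).
    assert (hs : INR (S l) <> 0) by (apply not_0_INR; lia).
    transitivity ((-1) ^ (n - l) * ((-1) ^ l * (-1) ^ l) * (-1) * f (n - l)%nat
                  * (INR (fact n) / INR (fact l))).
    + simpl pow. field. auto.
    + rewrite hsq. simpl pow. ring.
  - apply Nat.leb_gt in El. rewrite (proj2 (Nat.ltb_ge (S l) (S (S n)))) by lia. ring.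
Qed.

Lemma dL_DSEsum H i l : INR (S l) * DSEsum G s H i (S l) = Psi H i l.
Proof.
  unfold Psi. rewrite PsiN_pt by lia. unfold DSEsum. rewrite <- sumR_scal.
  apply sumR_ext; intros t ht. set (i' := (i - S t)%nat).
  unfold opDSE. rewrite <- sumR_scal, diffop_pt.
  set (term := fun j => dcoef H (S t) j * dLn j (powZ G (expo t)) i' l).
  rewrite (sumR_ext (S i') _ (fun n => if (l <=? n)%nat then term (n - l)%nat else 0)).
  2:{ intros n hn. rewrite <- Rmult_assoc, (Rmult_comm (INR (S l))), Rmult_assoc,
        derivAt0_coef.
      destruct (l <=? n)%nat eqn:El; [|ring]. apply Nat.leb_le in El.
      unfold term. rewrite dLn_pt. replace (l + (n - l))%nat with n by lia.
      unfold dcoef, expo. ring. }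
  rewrite sumR_offset. symmetry. apply sumR_trunc; [lia|].
  intros j h1 h2. unfold term. rewrite (degb_dLn j _ (powZ_degb _)) by lia. ring.
Qed.

Lemma rgop_Psi_vanish H i l : (forall i' b, (i' < i)%nat -> rge_defect i' b = 0) ->
  rgop 1 (Psi H) i l = 0.
Proof.
  intros HE. rewrite (agree_rgop i 1 _ _ (Psi_agree H i)) by lia.
  unfold PsiN. rewrite rgop_sum2. unfold sum2. apply sumR_zero; intros t ht.
  rewrite rgop_shift. unfold shiftk. destruct (S t <=? i)%nat eqn:Et; [|reflexivity].
  apply Nat.leb_le in Et. rewrite rgop_diffop.
  assert (Hm : 1 + sR * INR (S t) = IZR (expo t)).
  { unfold expo, sR. rewrite plus_IZR, mult_IZR, <- INR_IZR_INZ. reflexivity. }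
  rewrite Hm, (diffop_agree _ _ zero2), diffop_zero; [reflexivity|].
  eapply agree_trans; [apply rgop_powZ|]. intros a b h. rewrite mul2_cst_pt.
  rewrite (agree_mul (i - S t) (powZ G (expo t - 1)) rge_defect (powZ G (expo t - 1)) zero2);
    auto using agree_refl.
  - unfold mul2, zero2. rewrite sumR_zero; [ring|]. intros; apply sumR_zero; intros; ring.
  - intros a' b' h'. apply HE. lia.
Qed.

Lemma dL_G : dL G = mul2 (cst (sgnR s)) (Psi F).
Proof.
  ser2_ext. rewrite mul2_cst_pt. unfold dL. rewrite hsol.
  unfold one2. simpl andb. rewrite Bool.andb_false_r, <- dL_DSEsum. ring.
Qed.

Lemma rge_defect_L0 i : rge_defect i 0%nat = 0.
Proof.
  unfold rge_defect. rewrite rgop_pt, (sumR_single _ i).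
  - rewrite (proj2 (Nat.ltb_lt i (S i))) by lia. rewrite Nat.sub_diag, G_L0.
    unfold one2. simpl. ring.
  - intros q hq hne. rewrite G_L0. unfold one2.
    rewrite (proj2 (Nat.eqb_neq (i - q) 0)) by lia. simpl. ring.
Qed.

(* By induction on the [x]-order: [d_L (D_1 G) = D_1 (d_L G) = sgn(s) D_1 (Psi F)] vanishes
   at [x^i] once [D_1 G] vanishes below [x^i]; and the [L^0] part of [D_1 G] is zero. *)
Lemma rge i l : rge_defect i l = 0.
Proof.
  assert (H : forall N i, (i < N)%nat -> forall l, rge_defect i l = 0).
  { induction N as [|N IHN]; intros i' hi; [lia|]. intros l'.
    induction l' as [|l' _]; [apply rge_defect_L0|].
    assert (h : INR (S l') * rge_defect i' (S l') = 0).
    { change (INR (S l') * rge_defect i' (S l')) with (dL rge_defect i' l').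
      unfold rge_defect. rewrite <- rgop_dL, dL_G, rgop_scal, mul2_cst_pt.
      rewrite rgop_Psi_vanish; [ring|]. intros; apply IHN; lia. }
    apply Rmult_integral in h. destruct h as [h|h]; [|exact h].
    exfalso; apply (not_0_INR (S l')); auto. }
  apply (H (S i)); lia.
Qed.

(* [D_1 (Psi H) = 0] is the recursion
   [(l+1) [L^(l+1)] Psi = sum_a gamma_a (1 + s (i-a)) [x^(i-a) L^l] Psi], with [gamma_0 = 0]. *)
Lemma Psi_determined_by_L0 H1 H2 : (forall i, Psi H1 i 0%nat = Psi H2 i 0%nat) ->
  forall i l, Psi H1 i l = Psi H2 i l.
Proof.
  intros H0. assert (H : forall N i, (i < N)%nat -> forall l, Psi H1 i l = Psi H2 i l).
  { induction N as [|N IHN]; intros i hi; [lia|]. intros l.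
    induction l as [|l IHl]; [apply H0|].
    pose proof (rgop_Psi_vanish H1 i l (fun i' b _ => rge i' b)) as h1.
    pose proof (rgop_Psi_vanish H2 i l (fun i' b _ => rge i' b)) as h2.
    rewrite rgop_pt in h1, h2.
    assert (hs : forall a, (a < S i)%nat ->
      G a 1%nat * (1 * Psi H1 (i - a)%nat l + sR * (INR (i - a) * Psi H1 (i - a)%nat l))
      = G a 1%nat * (1 * Psi H2 (i - a)%nat l + sR * (INR (i - a) * Psi H2 (i - a)%nat l))).
    { intros a ha. destruct a as [|a].
      - rewrite G_x0. unfold one2. simpl. ring.
      - rewrite (IHN (i - S a)%nat) by lia. reflexivity. }
    rewrite (sumR_ext _ _ _ hs) in h1.
    assert (h : INR (S l) * (Psi H1 i (S l) - Psi H2 i (S l)) = 0) by lra.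
    apply Rmult_integral in h. destruct h as [h|h]; [|lra].
    exfalso; apply (not_0_INR (S l)); auto. }
  intros i l; apply (H (S i)); lia.
Qed.

Lemma DSEsum_determined_by_L1 H1 H2 :
  (forall i, DSEsum G s H1 i 1%nat = DSEsum G s H2 i 1%nat) ->
  forall i l, DSEsum G s H1 i l = DSEsum G s H2 i l.
Proof.
  intros H0 i l. destruct l as [|l]; [rewrite !DSEsum_L0; reflexivity|].
  apply (Rmult_eq_reg_l (INR (S l))); [|apply not_0_INR; lia].
  rewrite !dL_DSEsum. apply Psi_determined_by_L0. intros j.
  rewrite <- !dL_DSEsum, H0. reflexivity.
Qed.

End DysonSchwinger.

Section UnitriangularSystem.

Variable Q : (nat -> R) -> nat -> R.
Hypothesis Q_unitriangular : forall r r' i, (1 <= i)%nat ->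
  (forall k, (1 <= k)%nat -> (k < i)%nat -> r k = r' k) -> Q r i - Q r' i = r' i - r i.
Variable q : nat -> R.

Lemma Q_local r r' i : (1 <= i)%nat ->
  (forall k, (1 <= k)%nat -> (k <= i)%nat -> r k = r' k) -> Q r i = Q r' i.
Proof.
  intros hi H.
  pose proof (Q_unitriangular r r' i hi (fun k h1 h2 => H k h1 ltac:(lia))) as h.
  rewrite (H i) in h by lia. lra.
Qed.

(* [approx N] solves the first [N] equations; step [N+1] corrects [r_(N+1)] by the residual. *)
Fixpoint approx (N : nat) : nat -> R :=
  match N with
  | O => fun _ => 0
  | S N' => fun k => if (k =? S N')%nat
                     then approx N' (S N') + (Q (approx N') (S N') - q (S N'))
                     else approx N' k
  end.

Lemma approx_stable M N k : (N <= M)%nat -> (k <= N)%nat -> approx M k = approx N k.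
Proof.
  revert N; induction M as [|M IH]; intros N h1 h2.
  - replace N with 0%nat by lia; reflexivity.
  - destruct (Nat.eq_dec N (S M)) as [->|hne]; [reflexivity|].
    simpl. rewrite (proj2 (Nat.eqb_neq k (S M))) by lia. apply IH; lia.
Qed.

Lemma approx_correct N i : (1 <= i)%nat -> (i <= N)%nat -> Q (approx N) i = q i.
Proof.
  revert i; induction N as [|N IH]; intros i h1 h2; [lia|].
  assert (below : forall k, (k < S N)%nat -> approx (S N) k = approx N k).
  { intros k hk. simpl. rewrite (proj2 (Nat.eqb_neq k (S N))) by lia. reflexivity. }
  destruct (Nat.eq_dec i (S N)) as [->|hne].
  - pose proof (Q_unitriangular (approx (S N)) (approx N) (S N) h1
                  (fun k _ hk => below k hk)) as h.
    assert (step : approx (S N) (S N) = approx N (S N) + (Q (approx N) (S N) - q (S N)))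
      by (simpl; rewrite Nat.eqb_refl; reflexivity).
    lra.
  - rewrite (Q_local _ (approx N)) by (auto; intros; apply below; lia). apply IH; lia.
Qed.

Lemma unitriangular_solvable : exists r, forall i, (1 <= i)%nat -> Q r i = q i.
Proof.
  exists (fun k => approx k k). intros i hi.
  rewrite <- (approx_correct i i) by lia. apply Q_local; auto.
  intros k _ hk. symmetry; apply approx_stable; lia.
Qed.

Lemma unitriangular_unique r r' :
  (forall i, (1 <= i)%nat -> Q r i = q i) -> (forall i, (1 <= i)%nat -> Q r' i = q i) ->
  forall k, (1 <= k)%nat -> r' k = r k.
Proof.
  intros hr hr'. assert (H : forall N k, (1 <= k)%nat -> (k < N)%nat -> r' k = r k).
  { induction N as [|N IH]; intros k h1 h2; [lia|].
    pose proof (Q_unitriangular r r' k h1 (fun k' a b => eq_sym (IH k' a ltac:(lia)))) as h.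
    rewrite hr, hr' in h by lia. lra. }
  intros k hk; apply (H (S k)); lia.
Qed.

End UnitriangularSystem.

(** The theorem: with [H_k = r_k g_k] and [g_k = 1/rho + O(1)], half (2) fixes the residues
    [r_k] from the [L^1]-coefficients, and half (1) extends the equality to all of [L]. *)

Theorem mainTheorem1 (s : Z) (F : nat -> nat -> R) (G : ser2)
  (g : nat -> nat -> R)
  (hform : DSE_form s G)
  (hsol : DSE_solution s F G)
  (hg : forall k, (1 <= k)%nat -> g k O = 1) :
  exists r : nat -> R,
    (forall i l, DSEsum G s F i l = DSEsum G s (fun k j => r k * g k j) i l) /\
    (forall r' : nat -> R,
       (forall i l, DSEsum G s F i l = DSEsum G s (fun k j => r' k * g k j) i l) ->
       forall k, (1 <= k)%nat -> r' k = r k).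
Proof.
  set (Q := fun r i => DSEsum G s (fun k j => r k * g k j) i 1%nat).
  set (q := fun i => DSEsum G s F i 1%nat).
  assert (hQ : forall r r' i, (1 <= i)%nat ->
            (forall k, (1 <= k)%nat -> (k < i)%nat -> r k = r' k) ->
            Q r i - Q r' i = r' i - r i).
  { intros r r' i hi hr. unfold Q.
    rewrite (DSEsum_L1_unitriangular G s _ _ i hi).
    - rewrite hg by exact hi. ring.
    - intros k j hk1 hk2. rewrite hr by assumption. reflexivity. }
  destruct (unitriangular_solvable Q hQ q) as [r hr].
  exists r. split.
  - apply (DSEsum_determined_by_L1 s F G hform hsol). intros [|i]; [reflexivity|].
    symmetry. apply hr. lia.
  - intros r' hr'. apply (unitriangular_unique Q hQ q r r' hr).
    intros i _. unfold Q, q. rewrite hr'. reflexivity.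
Qed.
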